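(* Let $L$ be an infinite set and let $Q$ be either the edgeless cube $Q_L$ or the edged cube $\bar Q_L$. A basic sequence on $Q$ is universally convergent if and only if it is twist-finite.
   Context: Let $L$ be an infinite set, $-L=\{-r:r\in L\}$ a disjoint copy of $L$, and $0$ a new element; $L^\dagger=-L\cup\{0\}\cup L$ with $-(-r)=r$, $-0=0$. Adjoin $\pm\infty$ with $-(+\infty)=-\infty$ and set $\bar L^\dagger=L^\dagger\cup\{\pm\infty\}$. Points of $U=(\bar L^\dagger)^3$ have coordinates $x,y,z$. The edgeless cube $Q_L$ is the set of points of $U$ with exactly one coordinate in $\{\pm\infty\}$ (cells). The edged cube $\bar Q_L$ is the set of cells $(p,i)$ with $p\in U$, $i\in\{x,y,z\}$, $p_i\in\{\pm\infty\}$ ($i$ marks the face). For $i\in\{x,y,z\}$, $\alpha\in\bar L^\dagger$, the quarter-turn twist $T_{i,\alpha}$ is the permutation of cells fixing every cell whose point $p$ has $p_i\ne\alpha$ and acting on the others by $T_{x,\alpha}(\alpha,y,z)=(\alpha,-z,y)$, $T_{y,\alpha}(x,\alpha,z)=(z,\alpha,-x)$, $T_{z,\alpha}(x,y,\alpha)=(-y,x,\alpha)$ (in $\bar Q_L$ the marked coordinate is carried along by the rotation). Basic twists are $T,T^2,T^3$ for quarter-turn twists $T$. A basic sequence is a sequence $\langle\sigma_\eta:\eta<\theta\rangle$ of basic twists of ordinal length $\theta$; it is twist-finite if each basic twist occurs in it only finitely many times. A labelling is a map $f$ from cells to $X\cup\{\mathrm{NaC}\}$ for a set $X\not\ni\mathrm{NaC}$;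 it is legal if it never takes value NaC. A twist $\sigma$ acts by $(\sigma f)(c)=f(\sigma^{-1}c)$. Applying $\langle\sigma_\eta:\eta<\theta\rangle$ to $f_0$ produces $f_{\eta+1}=\sigma_\eta f_\eta$, and for limit $\lambda\le\theta$, $f_\lambda(c)$ is the eventually constant value of $f_\eta(c)$ ($\eta<\lambda$) if it exists and NaC otherwise; $f_\theta$ is the terminal labelling. The sequence is universally convergent if, applied to the identity labelling (each cell labelled by itself), its terminal labelling is legal. *)

From Stdlib Require Import List Bool ClassicalEpsilon.
Set Implicit Arguments.

Inductive coord (L : Type) : Type :=
| CPos (r : L)
| CNeg (r : L)
| CZero
| CPInf
| CNInf.
Arguments CZero {L}. Arguments CPInf {L}. Arguments CNInf {L}.

Definition cneg {L} (a : coord L) : coord L :=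
  match a with
  | CPos r => CNeg r | CNeg r => CPos r | CZero => CZero
  | CPInf => CNInf | CNInf => CPInf
  end.

Definition is_inf {L} (a : coord L) : bool :=
  match a with CPInf | CNInf => true | _ => false end.

Lemma is_inf_neg L (a : coord L) : is_inf (cneg a) = is_inf a.
Proof. destruct a; reflexivity. Qed.

Record point (L : Type) := Pt { px : coord L; py : coord L; pz : coord L }.

Inductive axis := AX | AY | AZ.

Definition get {L} (p : point L) (i : axis) : coord L :=
  match i with AX => px p | AY => py p | AZ => pz p end.

Definition rot {L} (i : axis) (p : point L) : point L :=
  match i with
  | AX => Pt (px p) (cneg (pz p)) (py p)
  | AY => Pt (pz p) (py p) (cneg (px p))
  | AZ => Pt (cneg (py p)) (px p) (pz p)
  end.

Definition rotinv {L} (i : axis) (p : point L) : point L :=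
  match i with
  | AX => Pt (px p) (pz p) (cneg (py p))
  | AY => Pt (cneg (pz p)) (py p) (px p)
  | AZ => Pt (py p) (cneg (px p)) (pz p)
  end.

(* how the marked coordinate is carried along by the rotation about axis i
   (self-inverse) *)
Definition rotm (i m : axis) : axis :=
  match i, m with
  | AX, AY => AZ | AX, AZ => AY
  | AY, AX => AZ | AY, AZ => AX
  | AZ, AX => AY | AZ, AY => AX
  | _, _ => m
  end.

Definition decide (P : Prop) : {P} + {~ P} := excluded_middle_informative P.

Definition ex1 (a b c : bool) : bool :=
  (a && negb b && negb c) || (negb a && b && negb c) || (negb a && negb b && c).

Definition is_cell {L} (p : point L) : bool :=
  ex1 (is_inf (px p)) (is_inf (py p)) (is_inf (pz p)).

Definition ecell (L : Type) := { p : point L | is_cell p = true }.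

Definition qt_pt {L} (i : axis) (a : coord L) (p : point L) : point L :=
  if decide (get p i = a) then rot i p else p.
Definition qtinv_pt {L} (i : axis) (a : coord L) (p : point L) : point L :=
  if decide (get p i = a) then rotinv i p else p.

Lemma is_cell_qt L i (a : coord L) p : is_cell (qt_pt i a p) = is_cell p.
Proof.
  unfold qt_pt; destruct (decide _); [|reflexivity].
  destruct i, p as [x y z]; unfold is_cell; simpl; rewrite ?is_inf_neg;
  destruct (is_inf x), (is_inf y), (is_inf z); reflexivity.
Qed.

Lemma is_cell_qtinv L i (a : coord L) p : is_cell (qtinv_pt i a p) = is_cell p.
Proof.
  unfold qtinv_pt; destruct (decide _); [|reflexivity].
  destruct i, p as [x y z]; unfold is_cell; simpl; rewrite ?is_inf_neg;
  destruct (is_inf x), (is_inf y), (is_inf z); reflexivity.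
Qed.

Definition eqt {L} (i : axis) (a : coord L) (c : ecell L) : ecell L :=
  exist _ (qt_pt i a (proj1_sig c)) (eq_trans (is_cell_qt i a _) (proj2_sig c)).
Definition eqtinv {L} (i : axis) (a : coord L) (c : ecell L) : ecell L :=
  exist _ (qtinv_pt i a (proj1_sig c)) (eq_trans (is_cell_qtinv i a _) (proj2_sig c)).

Definition dcell (L : Type) :=
  { pm : point L * axis | is_inf (get (fst pm) (snd pm)) = true }.

Definition dqt_pt {L} (i : axis) (a : coord L) (pm : point L * axis) :=
  if decide (get (fst pm) i = a) then (rot i (fst pm), rotm i (snd pm)) else pm.
Definition dqtinv_pt {L} (i : axis) (a : coord L) (pm : point L * axis) :=
  if decide (get (fst pm) i = a) then (rotinv i (fst pm), rotm i (snd pm)) else pm.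

Lemma dcell_qt L i (a : coord L) pm :
  is_inf (get (fst (dqt_pt i a pm)) (snd (dqt_pt i a pm))) = is_inf (get (fst pm) (snd pm)).
Proof.
  unfold dqt_pt; destruct (decide _); [|reflexivity].
  destruct i, pm as [[x y z] m]; destruct m; simpl; rewrite ?is_inf_neg; reflexivity.
Qed.

Lemma dcell_qtinv L i (a : coord L) pm :
  is_inf (get (fst (dqtinv_pt i a pm)) (snd (dqtinv_pt i a pm))) = is_inf (get (fst pm) (snd pm)).
Proof.
  unfold dqtinv_pt; destruct (decide _); [|reflexivity].
  destruct i, pm as [[x y z] m]; destruct m; simpl; rewrite ?is_inf_neg; reflexivity.
Qed.

Definition dqt {L} (i : axis) (a : coord L) (c : dcell L) : dcell L :=
  exist _ (dqt_pt i a (proj1_sig c)) (eq_trans (dcell_qt i a _) (proj2_sig c)).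
Definition dqtinv {L} (i : axis) (a : coord L) (c : dcell L) : dcell L :=
  exist _ (dqtinv_pt i a (proj1_sig c)) (eq_trans (dcell_qtinv i a _) (proj2_sig c)).

Inductive pw := Pw1 | Pw2 | Pw3.
Definition pw_nat (k : pw) : nat := match k with Pw1 => 1 | Pw2 => 2 | Pw3 => 3 end.

Record basic (L : Type) := BT { bt_axis : axis; bt_alpha : coord L; bt_pow : pw }.

(* action on labellings (None = NaC):  (sigma f)(c) = f (sigma^{-1} c),
   where sigma^{-1} = (T^{-1})^k; tinv i a is T_{i,a}^{-1}. *)
Definition act {C L} (tinv : axis -> coord L -> C -> C) (b : basic L)
  (f : C -> option C) : C -> option C :=
  fun c => f (Nat.iter (pw_nat (bt_pow b)) (tinv (bt_axis b) (bt_alpha b)) c).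

(* ---------- ordinal-length sequences: indexed by a well-ordered type ---------- *)
Definition well_order {I : Type} (lt : I -> I -> Prop) : Prop :=
  well_founded lt /\
  (forall a b c, lt a b -> lt b c -> lt a c) /\
  (forall a b, lt a b \/ a = b \/ lt b a).

(* stages eta <= theta: Some a for a < theta, None for theta itself *)
Definition lt_ext {I} (lt : I -> I -> Prop) (x y : option I) : Prop :=
  match x, y with
  | Some a, Some b => lt a b
  | Some _, None => True
  | None, _ => False
  end.

Definition ev_const {C I} (lt : I -> I -> Prop) (g : option I -> C -> option C)
  (eta : option I) (c : C) (v : option C) : Prop :=
  exists a, lt_ext lt (Some a) eta /\
    forall z, lt_ext lt z eta -> (z = Some a \/ lt_ext lt (Some a) z) -> g z c = v.

Definition is_run {C L I} (tinv : axis -> coord L -> C -> C) (lt : I -> I -> Prop)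
  (sigma : I -> basic L) (g : option I -> C -> option C) : Prop :=
  forall eta : option I,
    (* eta = 0 *)
    ((forall xi, ~ lt_ext lt xi eta) -> forall c, g eta c = Some c) /\
    (* eta = a + 1 *)
    (forall a, lt_ext lt (Some a) eta ->
       (forall z, lt_ext lt z eta -> z = Some a \/ lt_ext lt z (Some a)) ->
       g eta = act tinv (sigma a) (g (Some a))) /\
    (* eta limit *)
    ((exists xi, lt_ext lt xi eta) ->
       (forall a, lt_ext lt (Some a) eta -> exists z, lt_ext lt (Some a) z /\ lt_ext lt z eta) ->
       forall c,
         (forall v, ev_const lt g eta c v -> g eta c = v) /\
         ((forall v, ~ ev_const lt g eta c v) -> g eta c = None)).

Definition universally_convergent {C L I} (tinv : axis -> coord L -> C -> C)
  (lt : I -> I -> Prop) (sigma : I -> basic L) : Prop :=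
  exists g, is_run tinv lt sigma g /\ forall c, g None c <> None.

Definition twist_finite {L I} (sigma : I -> basic L) : Prop :=
  forall b : basic L, exists s : list I, forall eta, sigma eta = b -> In eta s.

Definition infinite_type (L : Type) : Prop :=
  forall s : list L, exists r, ~ In r s.

(* A twist moves only the cells of one layer, and every cell lies in a finite set of
   cells closed under all twists (those whose coordinates are, up to sign, the
   coordinates of the given cell).  If the sequence is twist-finite, only finitely
   many positions of the sequence touch such a set, so after the last of them below a
   limit stage its labels no longer change, and every label settles.
   Conversely, let a basic twist b occur infinitely often and let λ be the least stage
   below which it does.  Its occurrences are cofinal in the limit λ, and since the
   labellings of a run stay injective, a cell moved by b gets no eventual label at λ.
   This NaC cannot disappear: the labels of a finite closed set at a later stage are
   among its labels at an earlier one, while at the end they would be as many distinct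
   legal labels as there are cells. *)

From Stdlib Require Import List PeanoNat Bool Eqdep_dec FinFun Classical ClassicalEpsilon
  FunctionalExtensionality Lia.

(* Oriented like the condition [z = Some a \/ lt_ext lt (Some a) z] of [ev_const]. *)
Definition le_ext {I} (lt : I -> I -> Prop) (x y : option I) : Prop :=
  y = x \/ lt_ext lt x y.

Definition is_zero {I} (lt : I -> I -> Prop) (x : option I) : Prop :=
  forall y, ~ lt_ext lt y x.

Definition is_succ {I} (lt : I -> I -> Prop) (x : option I) (a : I) : Prop :=
  lt_ext lt (Some a) x /\ forall z, lt_ext lt z x -> le_ext lt z (Some a).

Definition is_lim {I} (lt : I -> I -> Prop) (x : option I) : Prop :=
  (exists y, lt_ext lt y x) /\
  forall a, lt_ext lt (Some a) x -> exists z, lt_ext lt (Some a) z /\ lt_ext lt z x.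

Lemma is_succ_iff {I} (lt : I -> I -> Prop) x a : is_succ lt x a <->
  lt_ext lt (Some a) x /\ forall z, lt_ext lt z x -> z = Some a \/ lt_ext lt z (Some a).
Proof.
  unfold is_succ, le_ext.
  split; intros [ax a_max]; split; try exact ax; intros z zx; destruct (a_max z zx); auto.
Qed.

Lemma le_ext_None {I} (lt : I -> I -> Prop) x : le_ext lt x None.
Proof. destruct x; [right; exact Logic.I | left; reflexivity]. Qed.

Section Stages.
Context {I : Type} {lt : I -> I -> Prop} (lt_wo : well_order lt).

Lemma Acc_lt_ext_Some {a} : Acc lt a -> Acc (lt_ext lt) (Some a).
Proof.
  induction 1 as [a _ IH]; constructor.
  intros [y|] ya; [exact (IH y ya) | contradiction].
Qed.

Lemma lt_ext_wf : well_founded (lt_ext lt).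
Proof.
  destruct lt_wo as [lt_wf _].
  intros [a|]; [exact (Acc_lt_ext_Some (lt_wf a))|].
  constructor; intros [y|] y_lt; [exact (Acc_lt_ext_Some (lt_wf y)) | contradiction].
Qed.

Lemma lt_ext_trans {x y z} : lt_ext lt x y -> lt_ext lt y z -> lt_ext lt x z.
Proof.
  destruct lt_wo as [_ [lt_tr _]].
  destruct x, y, z; simpl; intros; try contradiction; eauto.
Qed.

Lemma lt_ext_total x y : lt_ext lt x y \/ x = y \/ lt_ext lt y x.
Proof.
  destruct lt_wo as [_ [_ lt_tot]].
  destruct x as [a|], y as [b|]; simpl; auto.
  destruct (lt_tot a b) as [ab|[<-|ba]]; auto.
Qed.

Lemma lt_ext_irrefl {x} : ~ lt_ext lt x x.
Proof.
  induction (lt_ext_wf x) as [x _ IH]. intro xx. exact (IH x xx xx).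
Qed.

Lemma le_ext_trans {x y z} : le_ext lt x y -> le_ext lt y z -> le_ext lt x z.
Proof.
  intros [<-|xy] [<-|yz]; unfold le_ext; auto.
  right; exact (lt_ext_trans xy yz).
Qed.

Lemma lt_le_ext_trans {x y z} : lt_ext lt x y -> le_ext lt y z -> lt_ext lt x z.
Proof. intros xy [<-|yz]; [exact xy | exact (lt_ext_trans xy yz)]. Qed.

Lemma lt_ext_not_le {x y} : lt_ext lt x y -> ~ le_ext lt y x.
Proof. intros xy yx. exact (lt_ext_irrefl (lt_le_ext_trans xy yx)). Qed.

Lemma not_lt_ext_le {x y} : ~ lt_ext lt x y -> le_ext lt y x.
Proof.
  intro nxy. destruct (lt_ext_total x y) as [xy|[<-|yx]]; unfold le_ext; tauto.
Qed.

Lemma lt_ext_least (P : option I -> Prop) :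
  (exists x, P x) -> exists x, P x /\ forall y, lt_ext lt y x -> ~ P y.
Proof.
  intros [x Px]. apply NNPP; intro no_least. revert Px.
  induction (lt_ext_wf x) as [x _ IH]; intro Px.
  apply no_least; exists x; split; [exact Px|]. intros y yx Py. exact (IH y yx Py).
Qed.

Lemma lt_ext_max {u w x} : lt_ext lt u x -> lt_ext lt w x ->
  exists z, lt_ext lt z x /\ le_ext lt u z /\ le_ext lt w z.
Proof.
  intros ux wx. destruct (lt_ext_total u w) as [uw|[<-|wu]].
  - exists w; repeat split; [exact wx | right; exact uw | left; reflexivity].
  - exists u; repeat split; [exact ux | left; reflexivity | left; reflexivity].
  - exists u; repeat split; [exact ux | left; reflexivity | right; exact wu].
Qed.

Lemma stage_cases x : is_zero lt x \/ (exists a, is_succ lt x a) \/ is_lim lt x.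
Proof.
  destruct (classic (is_zero lt x)) as [x0|x_pos]; [left; exact x0|right].
  destruct (classic (exists a, is_succ lt x a)) as [x_succ|x_nsucc]; [left; exact x_succ|right].
  split.
  - apply NNPP; intro empty. apply x_pos. intros y yx. apply empty; eauto.
  - intros a ax. apply NNPP; intro no_between. apply x_nsucc. exists a; split; [exact ax|].
    intros z zx. apply not_lt_ext_le. intro az. apply no_between; eauto.
Qed.

Lemma lim_not_succ {x a} : is_lim lt x -> ~ is_succ lt x a.
Proof.
  intros [_ x_lim] [ax x_succ]. destruct (x_lim a ax) as [z [az zx]].
  exact (lt_ext_not_le az (x_succ z zx)).
Qed.

Lemma succ_unique {x a b} : is_succ lt x a -> is_succ lt x b -> a = b.
Proof.
  intros [ax a_succ] [bx b_succ].
  destruct (a_succ _ bx) as [ba|ba]; [congruence|].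
  exfalso; exact (lt_ext_not_le ba (b_succ _ ax)).
Qed.

Lemma succ_stage_exists a :
  exists z, is_succ lt z a /\ forall x, lt_ext lt (Some a) x -> le_ext lt z x.
Proof.
  destruct (lt_ext_least (lt_ext lt (Some a))) as [z [az z_least]]; [exists None; easy|].
  exists z; repeat split.
  - exact az.
  - intros y yz. apply not_lt_ext_le. exact (z_least y yz).
  - intros x ax. apply not_lt_ext_le. intro xz. exact (z_least x xz ax).
Qed.

End Stages.

Definition twist_inv {C L} (tinv : axis -> coord L -> C -> C) (b : basic L) : C -> C :=
  Nat.iter (pw_nat (bt_pow b)) (tinv (bt_axis b) (bt_alpha b)).

Definition closed_list {C L} (tinv : axis -> coord L -> C -> C) (k : list C) : Prop :=
  forall d i a, In d k -> In (tinv i a d) k.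

Lemma iter_injective {A} (f : A -> A) n : Injective f -> Injective (Nat.iter n f).
Proof. intros f_inj; induction n as [|n IH]; intros x y; simpl; auto. Qed.

Section TwistSequences.
Variables (C L : Type) (tinv : axis -> coord L -> C -> C) (layer : C -> axis -> coord L).
Hypothesis tinv_inj : forall i a, Injective (tinv i a).
Hypothesis tinv_off_layer : forall i a d, layer d i <> a -> tinv i a d = d.
Hypothesis locally_finite : forall c, exists k, In c k /\ closed_list tinv k.
Hypothesis basic_twist_moves : forall b, exists c, twist_inv tinv b c <> c.

Context {I : Type} (lt : I -> I -> Prop) (lt_wo : well_order lt) (sigma : I -> basic L).

Lemma ev_const_unique (h : option I -> C -> option C) x c v w :
  ev_const lt h x c v -> ev_const lt h x c w -> v = w.
Proof.
  intros [a [ax a_v]] [b [bx b_w]].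
  destruct (lt_ext_max lt_wo ax bx) as [z [zx [az bz]]].
  rewrite <- (a_v z zx az). exact (b_w z zx bz).
Qed.

Definition run_step (x : option I) (h : option I -> C -> option C) : C -> option C :=
  match excluded_middle_informative (is_zero lt x) with
  | left _ => fun c => Some c
  | right _ =>
    match excluded_middle_informative (exists a, is_succ lt x a) with
    | left x_succ =>
        let a := proj1_sig (constructive_indefinite_description _ x_succ) in
        act tinv (sigma a) (h (Some a))
    | right _ => fun c =>
        match excluded_middle_informative (exists v, ev_const lt h x c v) with
        | left ev => proj1_sig (constructive_indefinite_description _ ev)
        | right _ => None
        end
    end
  end.

Definition restrict_below (h : option I -> C -> option C) (x : option I) :
  option I -> C -> option C :=
  fun z => if excluded_middle_informative (lt_ext lt z x) then h z else fun _ => None.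

Lemma restrict_below_eq h x z : lt_ext lt z x -> restrict_below h x z = h z.
Proof. intro zx. unfold restrict_below. destruct (excluded_middle_informative _); tauto. Qed.

Lemma ev_const_restrict_below h x c v :
  ev_const lt (restrict_below h x) x c v <-> ev_const lt h x c v.
Proof.
  split; intros [a [ax a_v]]; exists a; split; [exact ax| |exact ax|];
    intros z zx az; [rewrite <- (restrict_below_eq h x z zx) | rewrite (restrict_below_eq h x z zx)];
    exact (a_v z zx az).
Qed.

Lemma run_exists : exists g, is_run tinv lt sigma g.
Proof.
  set (g := Fix (lt_ext_wf lt_wo) (fun _ => C -> option C)
              (fun x rec => run_step x (fun z =>
                 match excluded_middle_informative (lt_ext lt z x) with
                 | left zx => rec z zx
                 | right _ => fun _ => None
                 end))).
  assert (g_eq : forall x, g x = run_step x (restrict_below g x)).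
  { intro x. unfold g. rewrite Fix_eq; [reflexivity|].
    intros x0 f f' ff'. f_equal. apply functional_extensionality. intro z.
    destruct (excluded_middle_informative _); auto. }
  exists g. intro x. rewrite g_eq. unfold run_step. split; [|split].
  - intros x0 c. destruct (excluded_middle_informative (is_zero lt x)); [reflexivity|contradiction].
  - intros a ax a_succ.
    destruct (excluded_middle_informative (is_zero lt x)) as [x0|_]; [exfalso; exact (x0 _ ax)|].
    destruct (excluded_middle_informative (exists a, is_succ lt x a)) as [x_succ|x_nsucc].
    + destruct (constructive_indefinite_description _ x_succ) as [a' a'_succ]; simpl.
      rewrite (succ_unique lt_wo a'_succ (proj2 (is_succ_iff lt x a) (conj ax a_succ))), (restrict_below_eq g x _ ax).
      reflexivity.
    + exfalso; apply x_nsucc; exists a; apply is_succ_iff; split; assumption.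
  - intros x_pos x_lim c.
    destruct (excluded_middle_informative (is_zero lt x)) as [x0|_].
    { exfalso; destruct x_pos as [y yx]; exact (x0 y yx). }
    destruct (excluded_middle_informative (exists a, is_succ lt x a)) as [[a a_succ]|_].
    { exfalso; exact (lim_not_succ lt_wo (conj x_pos x_lim) a_succ). }
    destruct (excluded_middle_informative (exists v, ev_const lt (restrict_below g x) x c v))
      as [ev|no_ev].
    + destruct (constructive_indefinite_description _ ev) as [v' v'_ev]; simpl. split.
      * intros v v_ev. apply (ev_const_unique (restrict_below g x) x c); [exact v'_ev|].
        apply ev_const_restrict_below; exact v_ev.
      * intros none. exfalso. apply (none v'). apply ev_const_restrict_below; exact v'_ev.
    + split; [|reflexivity]. intros v v_ev. exfalso. apply no_ev. exists v.
      apply ev_const_restrict_below; exact v_ev.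
Qed.

Definition quiet (s : list I) (x y : option I) : Prop :=
  forall r, In r s -> le_ext lt x (Some r) -> lt_ext lt (Some r) y -> False.

Lemma quiet_mono s x x' y y' :
  le_ext lt x x' -> le_ext lt y' y -> quiet s x y -> quiet s x' y'.
Proof.
  intros xx' y'y xy_quiet r rs x'r ry'.
  exact (xy_quiet r rs (le_ext_trans lt_wo xx' x'r) (lt_le_ext_trans lt_wo ry' y'y)).
Qed.

Lemma quiet_tail y s : is_lim lt y -> exists x, lt_ext lt x y /\ quiet s x y.
Proof.
  intros [[x0 x0y] y_lim]. induction s as [|r s [x [xy x_quiet]]].
  - exists x0; split; [exact x0y | intros r []].
  - destruct (classic (lt_ext lt (Some r) y)) as [ry|nry].
    + destruct (y_lim r ry) as [z [rz zy]].
      destruct (lt_ext_max lt_wo xy zy) as [w [wy [xw zw]]].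
      exists w; split; [exact wy|]. intros r' [<-|r's] wr' r'y.
      * exact (lt_ext_not_le lt_wo (lt_le_ext_trans lt_wo rz zw) wr').
      * exact (quiet_mono s x w y y xw (or_introl eq_refl) x_quiet r' r's wr' r'y).
    + exists x; split; [exact xy|]. intros r' [<-|r's] xr' r'y; [exact (nry r'y)|].
      exact (x_quiet r' r's xr' r'y).
Qed.

Definition occurs_cofinally (b : basic L) (y : option I) : Prop :=
  forall a, lt_ext lt (Some a) y ->
    exists e, sigma e = b /\ lt_ext lt (Some a) (Some e) /\ lt_ext lt (Some e) y.

Lemma not_twist_finite_cofinal :
  ~ twist_finite sigma -> exists b y, is_lim lt y /\ occurs_cofinally b y.
Proof.
  intros not_tf. apply not_all_ex_not in not_tf as [b b_infinite].
  set (listed x := exists s, forall e, sigma e = b -> lt_ext lt (Some e) x -> In e s).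
  destruct (lt_ext_least lt_wo (fun x => ~ listed x)) as [y [y_unlisted below_listed]].
  { exists None. intros [s s_spec]. apply b_infinite. exists s. intros e be. now apply s_spec. }
  assert (cofinal : occurs_cofinally b y).
  { intros a ay. apply NNPP; intro none_after. apply y_unlisted.
    destruct (NNPP _ (below_listed _ ay)) as [s s_spec].
    exists (a :: s). intros e be ey.
    destruct (lt_ext_total lt_wo (Some e) (Some a)) as [ea|[ea|ae]].
    - right; exact (s_spec e be ea).
    - left; congruence.
    - exfalso; apply none_after; eauto. }
  exists b, y; repeat split; [|intros a ay..|exact cofinal].
  - apply NNPP; intro empty. apply y_unlisted. exists nil. intros e _ ey. apply empty; eauto.
  - destruct (cofinal a ay) as [e [_ [ae ey]]]. eauto.
Qed.

Definition axes : list axis := AX :: AY :: AZ :: nil.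
Definition powers : list pw := Pw1 :: Pw2 :: Pw3 :: nil.

Definition twists_touching (k : list C) : list (basic L) :=
  flat_map (fun d => flat_map (fun i => map (BT i (layer d i)) powers) axes) k.

Lemma twist_inv_fixes_untouched k b d :
  ~ In b (twists_touching k) -> In d k -> twist_inv tinv b d = d.
Proof.
  destruct b as [i a p]; intros untouched dk; unfold twist_inv; simpl.
  apply (Nat.iter_invariant _ _ _ (fun d' => d' = d)); [|reflexivity].
  intros d' ->. apply tinv_off_layer. intros <-. apply untouched.
  apply in_flat_map; exists d; split; [exact dk|].
  apply in_flat_map; exists i; split; [destruct i; simpl; tauto|].
  apply in_map; destruct p; simpl; tauto.
Qed.

Lemma twist_inv_closed k b d : closed_list tinv k -> In d k -> In (twist_inv tinv b d) k.
Proof. intros k_closed. apply (Nat.iter_invariant _ _ _ (fun d' => In d' k)). intro. apply k_closed. Qed.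

Lemma twist_inv_injective b : Injective (twist_inv tinv b).
Proof. apply iter_injective, tinv_inj. Qed.

Lemma twist_finite_positions :
  twist_finite sigma -> forall bs, exists s, forall e, In (sigma e) bs -> In e s.
Proof.
  intros tf bs; induction bs as [|b bs [s s_spec]]; [exists nil; simpl; tauto|].
  destruct (tf b) as [s_b s_b_spec]. exists (s_b ++ s).
  intros e [be|e_bs]; apply in_or_app; auto.
Qed.

Section Run.
Context {g : option I -> C -> option C} (g_run : is_run tinv lt sigma g).

Lemma run_zero x c : is_zero lt x -> g x c = Some c.
Proof. intros x0. exact (proj1 (g_run x) x0 c). Qed.

Lemma run_succ x a c : is_succ lt x a -> g x c = g (Some a) (twist_inv tinv (sigma a) c).
Proof.
  intros a_succ; apply is_succ_iff in a_succ as [ax a_max].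
  rewrite (proj1 (proj2 (g_run x)) a ax a_max). reflexivity.
Qed.

Lemma run_lim x c v : is_lim lt x -> ev_const lt g x c v -> g x c = v.
Proof. intros [x_pos x_lim]. exact (proj1 (proj2 (proj2 (g_run x)) x_pos x_lim c) v). Qed.

Lemma run_lim_defined x c v : is_lim lt x -> g x c = Some v -> ev_const lt g x c (Some v).
Proof.
  intros [x_pos x_lim] gxc. destruct (proj2 (proj2 (g_run x)) x_pos x_lim c) as [ev no_ev].
  destruct (classic (exists w, ev_const lt g x c w)) as [[w w_ev]|none].
  - rewrite <- gxc, (ev w w_ev). exact w_ev.
  - rewrite no_ev in gxc; [discriminate|]. intros w w_ev; exact (none (ex_intro _ w w_ev)).
Qed.

Lemma run_constant_on_quiet k s :
  (forall e, ~ In e s -> forall d, In d k -> twist_inv tinv (sigma e) d = d) ->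
  forall y x, le_ext lt x y -> quiet s x y -> forall d, In d k -> g x d = g y d.
Proof.
  intros fixes y. induction (lt_ext_wf lt_wo y) as [y _ IH].
  intros x [<-|xy] xy_quiet d dk; [reflexivity|].
  destruct (stage_cases lt_wo y) as [y0|[[a a_succ]|y_lim]].
  - exfalso; exact (y0 x xy).
  - destruct a_succ as [ay a_max].
    assert (a_free : ~ In a s) by (intro a_s; exact (xy_quiet a a_s (a_max x xy) ay)).
    rewrite (run_succ y a d (conj ay a_max)), (fixes a a_free d dk).
    apply (IH _ ay x (a_max x xy)); [|exact dk].
    exact (quiet_mono s x x y _ (or_introl eq_refl) (or_intror ay) xy_quiet).
  - destruct x as [a|]; [|contradiction].
    symmetry; apply (run_lim y d _ y_lim). exists a; split; [exact xy|].
    intros z zy az. symmetry. apply (IH z zy (Some a) az); [|exact dk].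
    exact (quiet_mono s _ _ y z (or_introl eq_refl) (or_intror zy) xy_quiet).
Qed.

Lemma run_defined_on k s : closed_list tinv k ->
  (forall e, ~ In e s -> forall d, In d k -> twist_inv tinv (sigma e) d = d) ->
  forall y d, In d k -> g y d <> None.
Proof.
  intros k_closed fixes y. induction (lt_ext_wf lt_wo y) as [y _ IH]. intros d dk.
  destruct (stage_cases lt_wo y) as [y0|[[a a_succ]|y_lim]].
  - rewrite (run_zero y d y0). discriminate.
  - rewrite (run_succ y a d a_succ).
    exact (IH _ (proj1 a_succ) _ (twist_inv_closed k (sigma a) d k_closed dk)).
  - destruct (quiet_tail y s y_lim) as [x [xy x_quiet]].
    rewrite <- (run_constant_on_quiet k s fixes y x (or_intror xy) x_quiet d dk).
    exact (IH x xy d dk).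
Qed.

Lemma run_injective y d1 d2 v : g y d1 = Some v -> g y d2 = Some v -> d1 = d2.
Proof.
  revert d1 d2. induction (lt_ext_wf lt_wo y) as [y _ IH]. intros d1 d2 gd1 gd2.
  destruct (stage_cases lt_wo y) as [y0|[[a a_succ]|y_lim]].
  - rewrite (run_zero y d1 y0) in gd1; rewrite (run_zero y d2 y0) in gd2. congruence.
  - rewrite (run_succ y a d1 a_succ) in gd1; rewrite (run_succ y a d2 a_succ) in gd2.
    apply (twist_inv_injective (sigma a)).
    exact (IH _ (proj1 a_succ) _ _ gd1 gd2).
  - destruct (run_lim_defined y d1 v y_lim gd1) as [a1 [a1y a1_v]].
    destruct (run_lim_defined y d2 v y_lim gd2) as [a2 [a2y a2_v]].
    destruct (lt_ext_max lt_wo a1y a2y) as [z [zy [a1z a2z]]].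
    exact (IH z zy _ _ (a1_v z zy a1z) (a2_v z zy a2z)).
Qed.

Lemma run_values_from_earlier k : closed_list tinv k ->
  forall y x, le_ext lt x y -> forall d v, In d k -> g y d = Some v ->
  exists d', In d' k /\ g x d' = Some v.
Proof.
  intros k_closed y. induction (lt_ext_wf lt_wo y) as [y _ IH].
  intros x [<-|xy] d v dk gyd; [eauto|].
  destruct (stage_cases lt_wo y) as [y0|[[a [ay a_max]]|y_lim]].
  - exfalso; exact (y0 x xy).
  - rewrite (run_succ y a d (conj ay a_max)) in gyd.
    exact (IH _ ay x (a_max x xy) _ v (twist_inv_closed k (sigma a) d k_closed dk) gyd).
  - destruct (run_lim_defined y d v y_lim gyd) as [a [ay a_v]].
    destruct (lt_ext_max lt_wo ay xy) as [z [zy [az xz]]].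
    exact (IH z zy x xz d v dk (a_v z zy az)).
Qed.

Lemma run_legal_throughout : (forall c, g None c <> None) -> forall x c, g x c <> None.
Proof.
  intros legal x c gxc.
  destruct (locally_finite c) as [k0 [ck0 k0_closed]].
  set (k := nodup (fun u w => excluded_middle_informative (u = w)) k0).
  assert (k_closed : closed_list tinv k).
  { intros d i a dk. apply nodup_In. apply k0_closed. apply nodup_In in dk. exact dk. }
  (* NaC and the distinct final labels of [k] all occur among the labels of [k] at [x]. *)
  assert (counting : length (None :: map (g None) k) <= length (map (g x) k)).
  { apply NoDup_incl_length.
    - constructor.
      + rewrite in_map_iff. intros [d [gd _]]. exact (legal d gd).
      + apply NoDup_map_NoDup_ForallPairs; [|apply NoDup_nodup].
        intros d1 d2 _ _ same. destruct (g None d1) as [v|] eqn:gd1; [|exfalso; exact (legal d1 gd1)].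
        exact (run_injective None d1 d2 v gd1 (eq_sym same)).
    - intros w [<-|w_in].
      + rewrite <- gxc. apply in_map, nodup_In, ck0.
      + apply in_map_iff in w_in as [d [<- dk]].
        destruct (g None d) as [v|] eqn:gd; [|exfalso; exact (legal d gd)].
        destruct (run_values_from_earlier k k_closed None x (le_ext_None lt x)
                    d v dk gd) as [d' [d'k gxd']].
        rewrite <- gxd'. apply in_map, d'k. }
  simpl in counting. rewrite !length_map in counting. lia.
Qed.

Lemma run_nac_at_cofinal_twist b y c :
  is_lim lt y -> occurs_cofinally b y -> twist_inv tinv b c <> c -> g y c = None.
Proof.
  intros y_lim cofinal moved. destruct (g y c) as [v|] eqn:gyc; [exfalso|reflexivity].
  destruct (run_lim_defined y c v y_lim gyc) as [a [ay eventually]].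
  destruct (cofinal a ay) as [e [sigma_e [ae ey]]].
  destruct (succ_stage_exists lt_wo e) as [z [z_succ z_least]].
  assert (zy : lt_ext lt z y).
  { destruct (z_least y ey) as [<-|zy]; [exfalso; exact (lim_not_succ lt_wo y_lim z_succ)|exact zy]. }
  apply moved, (run_injective (Some e) _ _ v).
  - rewrite <- sigma_e, <- (run_succ z e c z_succ).
    exact (eventually z zy (or_intror (lt_ext_trans lt_wo ae (proj1 z_succ)))).
  - exact (eventually _ ey (or_intror ae)).
Qed.

End Run.

Theorem twist_finite_universally_convergent :
  twist_finite sigma -> universally_convergent tinv lt sigma.
Proof.
  intros tf. destruct run_exists as [g g_run]. exists g; split; [exact g_run|]. intro c.
  destruct (locally_finite c) as [k [ck k_closed]].
  destruct (twist_finite_positions tf (twists_touching k)) as [s s_spec].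
  apply (run_defined_on g_run k s k_closed); [|exact ck].
  intros e e_free d dk. apply (twist_inv_fixes_untouched k); [|exact dk].
  intro touching. exact (e_free (s_spec e touching)).
Qed.

Theorem universally_convergent_twist_finite :
  universally_convergent tinv lt sigma -> twist_finite sigma.
Proof.
  intros [g [g_run legal]]. apply NNPP; intro not_tf.
  destruct (not_twist_finite_cofinal not_tf) as [b [y [y_lim cofinal]]].
  destruct (basic_twist_moves b) as [c moved].
  exact (run_legal_throughout g_run legal y c (run_nac_at_cofinal_twist g_run b y c y_lim cofinal moved)).
Qed.

Theorem universally_convergent_iff_twist_finite :
  universally_convergent tinv lt sigma <-> twist_finite sigma.
Proof.
  split; [exact universally_convergent_twist_finite | exact twist_finite_universally_convergent].
Qed.

End TwistSequences.

Lemma preimage_list {A B} (f : A -> B) : Injective f ->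
  forall ys : list B, exists xs, forall x, In x xs <-> In (f x) ys.
Proof.
  intros f_inj ys; induction ys as [|y ys [xs xs_spec]]; [exists nil; simpl; tauto|].
  destruct (classic (exists x, f x = y)) as [[x0 <-]|no_preimage].
  - exists (x0 :: xs). intro x; simpl; rewrite xs_spec. split.
    + intros [<-|x_xs]; auto.
    + intros [same|fx_ys]; [left; exact (f_inj _ _ same) | right; exact fx_ys].
  - exists xs. intro x; simpl; rewrite xs_spec. split; [auto|].
    intros [fx_y|fx_ys]; [exfalso; exact (no_preimage (ex_intro _ x (eq_sym fx_y)))|exact fx_ys].
Qed.

Lemma bool_sig_injective {A} (P : A -> bool) :
  Injective (@proj1_sig A (fun x => P x = true)).
Proof. intros u v. apply eq_sig_hprop. intros x p q. apply UIP_dec, bool_dec. Qed.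

Lemma cneg_involutive {L} (u : coord L) : cneg (cneg u) = u.
Proof. destruct u; reflexivity. Qed.

Lemma get_rotinv {L} i (p : point L) : get (rotinv i p) i = get p i.
Proof. destruct i; reflexivity. Qed.

Lemma rot_rotinv {L} i (p : point L) : rot i (rotinv i p) = p.
Proof. destruct i, p; simpl; rewrite ?cneg_involutive; reflexivity. Qed.

Lemma rotm_involutive i m : rotm i (rotm i m) = m.
Proof. destruct i, m; reflexivity. Qed.

Lemma qtinv_pt_on_layer {L} i (a : coord L) p : get p i = a -> qtinv_pt i a p = rotinv i p.
Proof. intro pa. unfold qtinv_pt. destruct (decide _); [reflexivity|contradiction]. Qed.

Lemma qtinv_pt_off_layer {L} i (a : coord L) p : get p i <> a -> qtinv_pt i a p = p.
Proof. intro pa. unfold qtinv_pt. destruct (decide _); [contradiction|reflexivity]. Qed.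

Lemma dqtinv_pt_off_layer {L} i (a : coord L) pm : get (fst pm) i <> a -> dqtinv_pt i a pm = pm.
Proof. intro pa. unfold dqtinv_pt. destruct (decide _); [contradiction|reflexivity]. Qed.

Lemma qt_qtinv_pt {L} i (a : coord L) p : qt_pt i a (qtinv_pt i a p) = p.
Proof.
  unfold qtinv_pt, qt_pt. destruct (decide (get p i = a)) as [pa|pa].
  - rewrite get_rotinv. destruct (decide (get p i = a)); [apply rot_rotinv|contradiction].
  - destruct (decide (get p i = a)); [contradiction|reflexivity].
Qed.

Lemma dqt_dqtinv_pt {L} i (a : coord L) pm : dqt_pt i a (dqtinv_pt i a pm) = pm.
Proof.
  destruct pm as [p m]. unfold dqtinv_pt, dqt_pt; simpl.
  destruct (decide (get p i = a)) as [pa|pa]; simpl.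
  - rewrite get_rotinv. destruct (decide (get p i = a)); [|contradiction].
    rewrite rot_rotinv, rotm_involutive. reflexivity.
  - destruct (decide (get p i = a)); [contradiction|reflexivity].
Qed.

Lemma qtinv_pt_injective {L} i (a : coord L) : Injective (qtinv_pt i a).
Proof.
  intros p q same. rewrite <- (qt_qtinv_pt i a p), <- (qt_qtinv_pt i a q), same. reflexivity.
Qed.

Lemma dqtinv_pt_injective {L} i (a : coord L) : Injective (dqtinv_pt i a).
Proof.
  intros p q same. rewrite <- (dqt_dqtinv_pt i a p), <- (dqt_dqtinv_pt i a q), same.
  reflexivity.
Qed.

Definition signed_coords {L} (p : point L) : list (coord L) :=
  px p :: cneg (px p) :: py p :: cneg (py p) :: pz p :: cneg (pz p) :: nil.

Lemma signed_coords_cneg {L} (p : point L) u :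
  In u (signed_coords p) -> In (cneg u) (signed_coords p).
Proof.
  unfold signed_coords; simpl.
  intros u_in; repeat destruct u_in as [<-|u_in]; rewrite ?cneg_involutive; tauto.
Qed.

Definition grid {L} (S : list (coord L)) : list (point L) :=
  flat_map (fun x => flat_map (fun y => map (Pt x y) S) S) S.

Lemma In_grid {L} (S : list (coord L)) q :
  In q (grid S) <-> In (px q) S /\ In (py q) S /\ In (pz q) S.
Proof.
  unfold grid. rewrite in_flat_map. split.
  - intros [x [xS q_in]]. apply in_flat_map in q_in as [y [yS q_in]].
    apply in_map_iff in q_in as [z [<- zS]]. simpl; auto.
  - destruct q as [x y z]; simpl; intros [xS [yS zS]]. exists x; split; [exact xS|].
    apply in_flat_map. exists y; split; [exact yS|]. apply in_map; exact zS.
Qed.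

Lemma qtinv_pt_grid {L} (S : list (coord L)) i a q :
  (forall u, In u S -> In (cneg u) S) -> In q (grid S) -> In (qtinv_pt i a q) (grid S).
Proof.
  intros S_neg q_in. unfold qtinv_pt. destruct (decide _); [|exact q_in].
  rewrite In_grid in *. destruct i, q; simpl in *; intuition.
Qed.

(* When [a] is infinite the other coordinates are finite and one must be nonzero: this is
   the only use of an element of [L], so only nonemptiness of [L] matters. *)
Definition moved_point {L} (r0 : L) (i : axis) (a : coord L) : point L :=
  match i with
  | AX => if is_inf a then Pt a (CPos r0) CZero else Pt a CPInf CZero
  | AY => if is_inf a then Pt (CPos r0) a CZero else Pt CPInf a CZero
  | AZ => if is_inf a then Pt (CPos r0) CZero a else Pt CPInf CZero a
  end.

Definition moved_mark {L} (i : axis) (a : coord L) : axis :=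
  match i with
  | AX => if is_inf a then AX else AY
  | AY => if is_inf a then AY else AX
  | AZ => if is_inf a then AZ else AX
  end.

Lemma get_moved_point {L} (r0 : L) i a : get (moved_point r0 i a) i = a.
Proof. destruct i, a; reflexivity. Qed.

Lemma moved_point_moved {L} (r0 : L) i a k :
  Nat.iter (pw_nat k) (rotinv i) (moved_point r0 i a) <> moved_point r0 i a.
Proof. destruct i, a, k; discriminate. Qed.

Lemma moved_point_is_cell {L} (r0 : L) i a : is_cell (moved_point r0 i a) = true.
Proof. destruct i, a; reflexivity. Qed.

Lemma moved_point_marked {L} (r0 : L) i a :
  is_inf (get (moved_point r0 i a) (moved_mark i a)) = true.
Proof. destruct i, a; reflexivity. Qed.

Section CubeOverPoints.
Variables (L C : Type) (tinv : axis -> coord L -> C -> C) (pt : C -> point L) (r0 : L).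
Hypothesis pt_tinv : forall i a c, pt (tinv i a c) = qtinv_pt i a (pt c).
Hypothesis tinv_inj : forall i a, Injective (tinv i a).
Hypothesis tinv_off_layer : forall i a d, get (pt d) i <> a -> tinv i a d = d.
Hypothesis pt_preimage_finite : forall ps, exists cs, forall d, In d cs <-> In (pt d) ps.
Hypothesis pt_onto_moved_point : forall i a, exists c, pt c = moved_point r0 i a.

Lemma pt_iter_on_layer i a n c : get (pt c) i = a ->
  pt (Nat.iter n (tinv i a) c) = Nat.iter n (rotinv i) (pt c).
Proof.
  intro ca. induction n as [|n IH]; [reflexivity|]. simpl.
  rewrite pt_tinv, IH. apply qtinv_pt_on_layer.
  apply (Nat.iter_invariant _ _ _ (fun q => get q i = a)); [|exact ca].
  intros q qa. rewrite get_rotinv. exact qa.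
Qed.

Lemma cube_basic_twist_moves b : exists c, twist_inv tinv b c <> c.
Proof.
  destruct b as [i a k]. destruct (pt_onto_moved_point i a) as [c c_pt].
  exists c. intro fixed. apply (moved_point_moved r0 i a k).
  rewrite <- c_pt, <- (pt_iter_on_layer i a).
  - unfold twist_inv in fixed; simpl in fixed. rewrite fixed. reflexivity.
  - rewrite c_pt. apply get_moved_point.
Qed.

Lemma cube_locally_finite c : exists k, In c k /\ closed_list tinv k.
Proof.
  destruct (pt_preimage_finite (grid (signed_coords (pt c)))) as [k k_spec].
  exists k; split.
  - apply k_spec, In_grid. unfold signed_coords; simpl; tauto.
  - intros d i a dk. apply k_spec. rewrite pt_tinv.
    apply qtinv_pt_grid; [apply signed_coords_cneg | apply k_spec, dk].
Qed.

Lemma cube_convergence (I : Type) (lt : I -> I -> Prop) (lt_wo : well_order lt)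
  (sigma : I -> basic L) :
  universally_convergent tinv lt sigma <-> twist_finite sigma.
Proof.
  exact (universally_convergent_iff_twist_finite C L tinv (fun d i => get (pt d) i)
           tinv_inj tinv_off_layer cube_locally_finite cube_basic_twist_moves lt lt_wo sigma).
Qed.

End CubeOverPoints.

Lemma edgeless_cube_convergence {L} (r0 : L) (I : Type) (lt : I -> I -> Prop) :
  well_order lt -> forall sigma : I -> basic L,
  universally_convergent (@eqtinv L) lt sigma <-> twist_finite sigma.
Proof.
  intros lt_wo sigma. apply (cube_convergence L (ecell L) eqtinv (@proj1_sig _ _) r0); try easy.
  - intros i a c d same. apply (bool_sig_injective is_cell), (qtinv_pt_injective i a).
    exact (f_equal (@proj1_sig _ _) same).
  - intros i a d off. apply (bool_sig_injective is_cell), qtinv_pt_off_layer, off.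
  - apply preimage_list, (bool_sig_injective is_cell).
  - intros i a. exists (exist _ (moved_point r0 i a) (moved_point_is_cell r0 i a)). reflexivity.
Qed.

Lemma edged_cube_convergence {L} (r0 : L) (I : Type) (lt : I -> I -> Prop) :
  well_order lt -> forall sigma : I -> basic L,
  universally_convergent (@dqtinv L) lt sigma <-> twist_finite sigma.
Proof.
  intros lt_wo sigma.
  assert (proj_inj : Injective (fun c : dcell L => proj1_sig c))
    by exact (bool_sig_injective (fun pm => is_inf (get (@fst (point L) axis pm) (snd pm)))).
  apply (cube_convergence L (dcell L) dqtinv (fun c => fst (proj1_sig c)) r0); try easy.
  - intros i a c. simpl. unfold dqtinv_pt, qtinv_pt. destruct (decide _); reflexivity.
  - intros i a c d same. apply proj_inj, (dqtinv_pt_injective i a).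
    exact (f_equal (@proj1_sig _ _) same).
  - intros i a d off. apply proj_inj, dqtinv_pt_off_layer, off.
  - intros ps. destruct (preimage_list _ proj_inj (list_prod ps axes)) as [cs cs_spec].
    exists cs. intro d. rewrite cs_spec. destruct (proj1_sig d) as [p m]; simpl.
    rewrite in_prod_iff. destruct m; simpl; tauto.
  - intros i a. exists (exist _ (moved_point r0 i a, moved_mark i a) (moved_point_marked r0 i a)).
    reflexivity.
Qed.

Theorem lemma3p3 (L : Type) (HL : infinite_type L) :
  (forall (I : Type) (lt : I -> I -> Prop), well_order lt ->
     forall sigma : I -> basic L,
       universally_convergent (@eqtinv L) lt sigma <-> twist_finite sigma) /\
  (forall (I : Type) (lt : I -> I -> Prop), well_order lt ->
     forall sigma : I -> basic L,
       universally_convergent (@dqtinv L) lt sigma <-> twist_finite sigma).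
Proof.
  destruct (HL nil) as [r0 _].
  split; [exact (edgeless_cube_convergence r0) | exact (edged_cube_convergence r0)].
Qed.
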